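(* Let $N\ge2$, $x_1>x_2>\cdots>x_N$ be real, and $\rho=\sum_{j=1}^N\rho_j\delta_{x_j}$ with $\rho_j>0$, $\sum\rho_j=1$. For $t\ge0$ let $\rho_t=e^{2tx}d\rho(x)/\int e^{2tx}d\rho(x)$, and for $1\le j\le N$ let $x_1^{(j)}(t)>\cdots>x_j^{(j)}(t)$ be the zeros of the monic orthogonal polynomial $P_j(x;\rho_t)$. Then for each $j=1,\dots,N$ and $k=1,\dots,j$, $\lim_{t\to\infty}x_k^{(j)}(t)=x_k$, and moreover $|x_k^{(j)}(t)-x_k|=O(e^{-ct})$ as $t\to\infty$, where $c=\min_{i=1,\dots,N-1}(x_i-x_{i+1})$.
   Context: $P_j(x;\rho_t)$ is the unique monic polynomial of degree $j$ orthogonal in $L^2(\rho_t)$ to all polynomials of degree less than $j$; its zeros are real and simple. *)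

From HB Require Import structures.
From mathcomp Require Import all_boot all_order all_algebra.
From mathcomp Require Import all_classical all_reals all_analysis.
Set Implicit Arguments. Unset Strict Implicit. Unset Printing Implicit Defensive.
Import Order.TTheory GRing.Theory Num.Theory.
Local Open Scope ring_scope.

(* Points x 1 > ... > x N, weights rho 1, ..., rho N (1-based, as in the paper).
   rho = sum_i rho_i delta_{x_i};  rho_t = e^{2tx} d rho(x) / int e^{2tx} d rho. *)

Definition Zt (R : realType) (N : nat) (rho x : nat -> R) (t : R) : R :=
  \sum_(1 <= i < N.+1) rho i * expR (2 * t * x i).

Definition wt (R : realType) (N : nat) (rho x : nat -> R) (t : R) (i : nat) : R :=
  rho i * expR (2 * t * x i) / Zt N rho x t.

Definition ipt (R : realType) (N : nat) (rho x : nat -> R) (t : R)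
    (p q : {poly R}) : R :=
  \sum_(1 <= i < N.+1) wt N rho x t i * p.[x i] * q.[x i].

(* P is a monic polynomial of degree j orthogonal in L^2(rho_t) to all
   polynomials of degree < j (i.e. P = P_j(x; rho_t), which is unique). *)
Definition is_monic_OP (R : realType) (N : nat) (rho x : nat -> R) (t : R)
    (j : nat) (P : {poly R}) : Prop :=
  P \is monic /\ size P = j.+1 /\
  forall q : {poly R}, (size q <= j)%N -> ipt N rho x t P q = 0.

Definition mingap (R : realType) (N : nat) (x : nat -> R) : R :=
  \big[Num.min/(x 1%N - x 2%N)]_(1 <= i < N) (x i - x i.+1).

From HB Require Import structures.
From mathcomp Require Import all_boot all_order all_algebra.
From mathcomp Require Import all_classical all_reals all_analysis.
From mathcomp Require Import ring lra.
Import Order.TTheory GRing.Theory Num.Theory.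
Import numFieldNormedType.Exports.
Local Open Scope classical_set_scope.
Local Open Scope ring_scope.
Set Implicit Arguments. Unset Strict Implicit. Unset Printing Implicit Defensive.

(* P_j(.; rho_t) minimises the L^2(rho_t) norm among monic polynomials of
   degree j.  Comparing it with prod_(m <= j) (X - x_m), which vanishes at
   x_1, ..., x_j, bounds rho_t(x_k) P_j(x_k)^2 by the weights of x_(j+1), ...,
   x_N, and relative to rho_t(x_k) these are O(e^(-2ct)); hence
   |P_j(x_k)| = O(e^(-ct)) for every k <= j.  Once this is below (c/4)^j, each
   node x_m has a zero within c/4, and as these neighbourhoods are disjoint and
   ordered like the zeros, it is the m-th zero.  The other factors of
   |P_j(x_k)| = prod_m |x_k - z_m| are then at least c/4, which leaves
   |x_k - z_k| = O(e^(-ct)). *)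

Lemma size_subr_monic (R : nzRingType) (p q : {poly R}) :
  p \is monic -> q \is monic -> size p = size q -> (size (p - q)%R < size p)%N.
Proof.
move=> mp mq spq; case sp: (size p) => [|n].
  by move/eqP: sp; rewrite size_poly_eq0 (negbTE (monic_neq0 mp)).
rewrite ltnS; apply/leq_sizeP => i; rewrite leq_eqVlt => /predU1P[<-|lt_ni].
  by rewrite coefB -[n]/(n.+1.-1) -sp -lead_coefE spq -lead_coefE !(monicP _) ?subrr.
by rewrite coefB !nth_default ?subrr -?spq ?sp.
Qed.

Lemma horner_monic_decr_roots (R : realFieldType) (p : {poly R}) (j : nat)
    (z : nat -> R) :
  p \is monic -> size p = j.+1 ->
  (forall k l, (1 <= k)%N -> (k < l)%N -> (l <= j)%N -> z l < z k) ->
  (forall k, (1 <= k <= j)%N -> root p (z k)) ->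
  forall y, p.[y] = \prod_(1 <= m < j.+1) (y - z m).
Proof.
move=> monp sizep z_decr z_root y.
have uniq_z : uniq_roots (map z (index_iota 1 j.+1)).
  rewrite uniq_rootsE map_inj_in_uniq ?iota_uniq // => a b.
  rewrite !mem_index_iota => /andP[a_gt0 aj] /andP[b_gt0 bj] zab.
  case: (ltngtP a b) => // [ab|ba].
  - by have := z_decr a b a_gt0 ab bj; rewrite zab ltxx.
  - by have := z_decr b a b_gt0 ba aj; rewrite zab ltxx.
have all_root : all (root p) (map z (index_iota 1 j.+1)).
  by apply/allP => w /mapP[m]; rewrite mem_index_iota => mj ->; exact: z_root.
rewrite (all_roots_prod_XsubC _ all_root uniq_z) ?size_map ?size_iota ?subn1 //.
rewrite (monicP monp) scale1r horner_prod big_map.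
by apply: eq_bigr => m _; rewrite hornerXsubC.
Qed.

Lemma total_increasing_rel_refl (j : nat) (r : nat -> nat -> Prop) :
  (forall m, (1 <= m <= j)%N -> exists2 m', (1 <= m' <= j)%N & r m m') ->
  (forall m m1 m2, (1 <= m)%N -> (m < j)%N -> (1 <= m1 <= j)%N ->
     (1 <= m2 <= j)%N -> r m m1 -> r m.+1 m2 -> (m1 < m2)%N) ->
  forall m, (1 <= m <= j)%N -> r m m.
Proof.
move=> r_total r_incr.
have le_rel m : (1 <= m <= j)%N -> forall m', (1 <= m' <= j)%N -> r m m' -> (m <= m')%N.
  elim: m => [|m IH] mj m' m'j rmm'; first by case/andP: m'j.
  have [->|m_gt0] := posnP m; first by case/andP: m'j.
  have m_lt_j : (m < j)%N by case/andP: mj.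
  have mj' : (1 <= m <= j)%N by rewrite m_gt0 ltnW.
  have [m'' m''j rmm''] := r_total m mj'.
  have le_mm'' := IH mj' m'' m''j rmm''.
  exact: leq_ltn_trans le_mm'' (r_incr m m'' m' m_gt0 m_lt_j m''j m'j rmm'' rmm').
have ge_rel d m : (m + d = j)%N -> (1 <= m)%N -> forall m', (1 <= m' <= j)%N ->
    r m m' -> (m' <= m)%N.
  elim: d m => [|d IH] m mdj m_gt0 m' m'j rmm'; first by case/andP: m'j; rewrite -mdj addn0.
  have m_lt_j : (m < j)%N by rewrite -mdj addnS ltnS leq_addr.
  have [m'' m''j rm1m''] := r_total m.+1 m_lt_j.
  have le_m''m1 := IH m.+1 (etrans (addSnnS m d) mdj) isT m'' m''j rm1m''.
  exact: leq_trans (r_incr m m' m'' m_gt0 m_lt_j m'j m''j rmm' rm1m'') le_m''m1.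
move=> m /[dup] mj /andP[m_gt0 m_le_j]; have [m' m'j rmm'] := r_total m mj.
suff m'_eq : m' = m by rewrite m'_eq in rmm'.
apply/eqP; rewrite eqn_leq (le_rel m mj m' m'j rmm') andbT.
by rewrite (ge_rel (j - m)%N m) ?subnKC.
Qed.

Lemma nodes_near_roots (R : realFieldType) (j : nat) (eta : R) (x z : nat -> R) :
  0 <= eta ->
  (forall m1 m2, (1 <= m1)%N -> (m1 < m2)%N -> (m2 <= j)%N -> 2 * eta < x m1 - x m2) ->
  (forall m1 m2, (1 <= m1)%N -> (m1 < m2)%N -> (m2 <= j)%N -> z m2 < z m1) ->
  (forall m, (1 <= m <= j)%N -> `|\prod_(1 <= i < j.+1) (x m - z i)| < eta ^+ j) ->
  forall m, (1 <= m <= j)%N -> `|x m - z m| <= eta.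
Proof.
move=> eta_ge0 x_gap z_decr small m mj.
apply: (@total_increasing_rel_refl j (fun m m' => `|x m - z m'| <= eta)) => //.
- move=> {}m {}mj; apply: contrapT => no_close.
  have far i : (1 <= i <= j)%N -> eta <= `|x m - z i|.
    by move=> ij; rewrite leNgt; apply/negP => /ltW close; apply: no_close; exists i.
  have eta_pow : eta ^+ j = \prod_(1 <= i < j.+1) eta by rewrite prodr_const_nat subn1.
  have := small m mj; rewrite normr_prod eta_pow ltNge => /negP; apply.
  rewrite big_seq_cond [leRHS]big_seq_cond; apply: ler_prod => i.
  by rewrite andbT mem_index_iota eta_ge0 => /far.
- move=> m1 m1' m2' m1_gt0 m1j m1'j m2'j.
  rewrite !ler_norml => /andP[near1_lo near1_hi] /andP[near2_lo near2_hi].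
  have := x_gap m1 m1.+1 m1_gt0 (ltnSn m1) m1j.
  case: (ltngtP m1' m2') => // [m2'_lt|eq_m'] gap.
  + have := z_decr m2' m1' (proj1 (andP m2'j)) m2'_lt (proj2 (andP m1'j)); lra.
  + rewrite eq_m' in near1_lo near1_hi; lra.
Qed.

Lemma prodr_const_nat_neq (R : comNzRingType) (a : R) (j k : nat) : (1 <= k <= j)%N ->
  \prod_(1 <= m < j.+1 | m != k) a = a ^+ j.-1.
Proof.
move=> kj; rewrite big_const_seq iter_mulr mulr1; congr (_ ^+ _).
have := count_predC (pred1 k) (index_iota 1 j.+1).
rewrite count_uniq_mem ?iota_uniq // mem_index_iota kj size_iota subn1 add1n.
by move=> /= e; rewrite -[in RHS]e.
Qed.

Lemma node_root_dist_le (R : realFieldType) (j k : nat) (eta : R) (x z : nat -> R) :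
  (forall m1 m2, (1 <= m1)%N -> (m1 < m2)%N -> (m2 <= j)%N -> 2 * eta <= x m1 - x m2) ->
  (forall m, (1 <= m <= j)%N -> `|x m - z m| <= eta) ->
  (1 <= k <= j)%N ->
  `|x k - z k| * eta ^+ j.-1 <= `|\prod_(1 <= m < j.+1) (x k - z m)|.
Proof.
move=> x_gap near kj.
have eta_ge0 : 0 <= eta by apply: le_trans (near k kj); exact: normr_ge0.
rewrite normr_prod (bigD1_seq k) ?iota_uniq ?mem_index_iota //= -(prodr_const_nat_neq _ kj).
rewrite ler_wpM2l // big_seq_cond [leRHS]big_seq_cond.
apply: ler_prod => m /andP[]; rewrite mem_index_iota => mj m_neq_k.
rewrite eta_ge0 /= ler_normr.
have := near m mj; rewrite ler_norml => /andP[near_lo near_hi].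
case: (ltngtP k m) m_neq_k => // [km|mk] _; apply/orP; [left|right].
- have := x_gap k m (proj1 (andP kj)) km (proj2 (andP mj)); lra.
- have := x_gap m k (proj1 (andP mj)) mk (proj2 (andP kj)); lra.
Qed.

Lemma mingap_le (R : realType) (N : nat) (x : nat -> R) (i l : nat) :
  (forall i l, (1 <= i)%N -> (i < l)%N -> (l <= N)%N -> x l < x i) ->
  (1 <= i)%N -> (i < l)%N -> (l <= N)%N -> mingap N x <= x i - x l.
Proof.
case: l => [//|l] x_decr i_gt0 il lN.
have gap_l : mingap N x <= x l - x l.+1.
  by apply: ge_bigmin_seq; rewrite // mem_index_iota (leq_trans i_gt0 il).
apply: le_trans gap_l _; rewrite lerD2r.
case: (ltngtP i l) => [il'|li|->] //; first exact/ltW/x_decr/ltnW.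
by move: il; rewrite ltnS leqNgt li.
Qed.

Lemma mingap_gt0 (R : realType) (N : nat) (x : nat -> R) :
  (2 <= N)%N ->
  (forall i l, (1 <= i)%N -> (i < l)%N -> (l <= N)%N -> x l < x i) ->
  0 < mingap N x.
Proof.
move=> N_ge2 x_decr; rewrite /mingap big_seq.
apply: (big_ind (fun v => 0 < v)); first by rewrite subr_gt0 x_decr.
  by move=> a b a_gt0 b_gt0; rewrite lt_min a_gt0 b_gt0.
by move=> i; rewrite mem_index_iota => /andP[i_gt0 iN]; rewrite subr_gt0 x_decr.
Qed.

Section OrthogonalPolynomialAtNodes.
Variables (R : realType) (N : nat) (rho x : nat -> R).
Hypothesis N_gt0 : (0 < N)%N.
Hypothesis rho_gt0 : forall i, (1 <= i <= N)%N -> 0 < rho i.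

Lemma Zt_gt0 t : 0 < Zt N rho x t.
Proof.
rewrite /Zt (bigD1_seq 1%N) ?iota_uniq ?mem_index_iota //= ltr_pwDl //.
  by rewrite mulr_gt0 ?expR_gt0 ?rho_gt0.
rewrite big_seq_cond sumr_ge0 // => i /andP[]; rewrite mem_index_iota => iN _.
by rewrite mulr_ge0 ?expR_ge0 ?ltW ?rho_gt0.
Qed.

Lemma wt_gt0 t i : (1 <= i <= N)%N -> 0 < wt N rho x t i.
Proof. by move=> iN; rewrite divr_gt0 ?Zt_gt0 ?mulr_gt0 ?expR_gt0 ?rho_gt0. Qed.

Lemma wtE t i k : (1 <= k <= N)%N ->
  wt N rho x t i = rho i / rho k * expR (2 * t * (x i - x k)) * wt N rho x t k.
Proof.
move=> kN; rewrite /wt mulrBr expRB; field.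
by rewrite !gt_eqF ?Zt_gt0 ?expR_gt0 ?rho_gt0.
Qed.

Lemma wt_horner_le_ipt t p k : (1 <= k <= N)%N ->
  wt N rho x t k * p.[x k] ^+ 2 <= ipt N rho x t p p.
Proof.
move=> kN; rewrite /ipt (bigD1_seq k) ?iota_uniq ?mem_index_iota //= -mulrA -expr2.
rewrite lerDl big_seq_cond sumr_ge0 // => i /andP[]; rewrite mem_index_iota => iN _.
by rewrite -mulrA -expr2 mulr_ge0 ?sqr_ge0 ?ltW ?wt_gt0.
Qed.

Lemma monic_OP_ipt_min t j P Q : is_monic_OP N rho x t j P ->
  Q \is monic -> size Q = j.+1 -> ipt N rho x t P P <= ipt N rho x t Q Q.
Proof.
move=> [monP [sizeP orthP]] monQ sizeQ.
have := orthP (Q - P); rewrite -ltnS -sizeQ size_subr_monic ?sizeP // => /(_ isT) orth.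
rewrite -[leLHS]addr0 -(mulr0 2) -orth /ipt mulr_sumr -big_split /=.
rewrite big_seq_cond [leRHS]big_seq_cond; apply: ler_sum => i /andP[].
rewrite mem_index_iota => iN _; rewrite hornerD hornerN.
have := ltW (wt_gt0 t iN).
set w := wt _ _ _ _ _; set a := P.[x i]; set b := Q.[x i] => w_ge0.
have -> : w * b * b = w * a * a + 2 * (w * a * (b - a)) + w * (b - a) ^+ 2 by ring.
by rewrite lerDl mulr_ge0 ?sqr_ge0.
Qed.

Definition node_poly (j : nat) : {poly R} := \prod_(1 <= m < j.+1) ('X - (x m)%:P).

Lemma node_poly_monic j : node_poly j \is monic.
Proof. exact: monic_prod_XsubC. Qed.

Lemma size_node_poly j : size (node_poly j) = j.+1.
Proof. by rewrite size_prod_XsubC size_iota subn1. Qed.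

Lemma node_poly_root j m : (1 <= m <= j)%N -> (node_poly j).[x m] = 0.
Proof.
move=> mj; rewrite horner_prod (bigD1_seq m) ?iota_uniq ?mem_index_iota //=.
by rewrite hornerXsubC subrr mul0r.
Qed.

Hypothesis x_decr : forall i l, (1 <= i)%N -> (i < l)%N -> (l <= N)%N -> x l < x i.

Lemma monic_OP_horner_sqr_le t j k P : 0 <= t -> (j <= N)%N -> (1 <= k <= j)%N ->
  is_monic_OP N rho x t j P ->
  P.[x k] ^+ 2 <= (\sum_(1 <= i < N.+1) rho i / rho k * (node_poly j).[x i] ^+ 2)
                  * expR (- mingap N x * t) ^+ 2.
Proof.
move=> t_ge0 jN /andP[k_gt0 kj] OP_P.
have kN : (1 <= k <= N)%N by rewrite k_gt0 (leq_trans kj).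
rewrite -(ler_pM2l (wt_gt0 t kN)).
apply: le_trans (wt_horner_le_ipt t P kN) _.
apply: le_trans (monic_OP_ipt_min OP_P (node_poly_monic j) (size_node_poly j)) _.
rewrite /ipt mulr_suml mulr_sumr big_seq_cond [leRHS]big_seq_cond.
apply: ler_sum => i /andP[]; rewrite mem_index_iota => iN _.
have [ij|ji] := leqP i j.
  have ij' : (1 <= i <= j)%N by rewrite ij andbT; case/andP: iN.
  by rewrite node_poly_root // expr0n /= !(mulr0, mul0r).
have E_le : expR (2 * t * (x i - x k)) <= expR (- mingap N x * t) ^+ 2.
  rewrite -expRM_natl ler_expR.
  have := mingap_le x_decr k_gt0 (leq_ltn_trans kj ji) (proj2 (andP iN)); nra.
rewrite -mulrA -expr2 (wtE t i kN).
set w := wt _ _ _ _ k; set r := rho i / rho k; set q2 := (node_poly j).[x i] ^+ 2.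
set E := expR (2 * t * _); set e2 := expR _ ^+ 2.
have -> : r * E * w * q2 = r * w * q2 * E by ring.
have -> : w * (r * q2 * e2) = r * w * q2 * e2 by ring.
have w_ge0 : 0 <= w by exact/ltW/wt_gt0.
have r_ge0 : 0 <= r by rewrite divr_ge0 ?ltW ?rho_gt0.
by rewrite ler_wpM2l // (mulr_ge0 (mulr_ge0 r_ge0 w_ge0) (sqr_ge0 _)).
Qed.

Lemma monic_OP_horner_le j : (j <= N)%N ->
  exists2 A, 0 <= A & forall t k P, 0 <= t -> (1 <= k <= j)%N ->
    is_monic_OP N rho x t j P -> `|P.[x k]| <= A * expR (- mingap N x * t).
Proof.
move=> jN; pose B k := \sum_(1 <= i < N.+1) rho i / rho k * (node_poly j).[x i] ^+ 2.
pose M := \big[Num.max/0]_(1 <= k < j.+1) B k.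
have M_ge0 : 0 <= M by exact: bigmax_ge_id.
exists (Num.sqrt M); first exact: sqrtr_ge0.
move=> t k P t_ge0 kj OP_P.
have B_le_M : B k <= M by apply: le_bigmax_seq; rewrite // mem_index_iota.
rewrite -[expR _]ger0_norm ?expR_ge0 // -!sqrtr_sqr -sqrtrM //; apply: ler_wsqrtr.
apply: le_trans (monic_OP_horner_sqr_le t_ge0 jN kj OP_P) _.
by rewrite ler_wpM2r ?sqr_ge0.
Qed.
End OrthogonalPolynomialAtNodes.

Lemma expR_decay (R : realType) (c B : R) : 0 < c -> 0 < B ->
  exists2 T, 0 <= T & forall t, T <= t -> expR (- c * t) <= B.
Proof.
move=> c_gt0 B_gt0; exists (c * B)^-1; first by rewrite invr_ge0 ltW ?mulr_gt0.
move=> t Tt; rewrite mulNr expRN -[B]invrK lef_pV2 ?posrE ?expR_gt0 ?invr_gt0 //.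
apply: le_trans (expR_ge1Dx (c * t)).
have : B^-1 <= c * t.
  have -> : B^-1 = c * (c * B)^-1 by field; rewrite !gt_eqF.
  by rewrite ler_pM2l.
lra.
Qed.

Lemma cvg_expR_bound (R : realType) (f : R -> R) (l C c T : R) : 0 < c ->
  (forall t, T <= t -> `|f t - l| <= C * expR (- c * t)) -> f t @[t --> +oo] --> l.
Proof.
move=> c_gt0 f_near; apply/cvgrPdist_le => eps eps_gt0.
have C1_gt0 : 0 < `|C| + 1 by rewrite ltr_wpDl.
have [T' _ small] := expR_decay c_gt0 (divr_gt0 eps_gt0 C1_gt0).
near=> t.
have Tt : T <= t by near: t; apply: nbhs_pinfty_ge; exact: num_real.
have T't : T' <= t by near: t; apply: nbhs_pinfty_ge; exact: num_real.
rewrite distrC; apply: le_trans (f_near t Tt) _.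
apply: le_trans (_ : (`|C| + 1) * expR (- c * t) <= _).
  by rewrite ler_wpM2r ?expR_ge0 // (le_trans (ler_norm C)) ?lerDl.
by rewrite -ler_pdivlMl // [leRHS]mulrC; exact: small.
Unshelve. all: by end_near.
Qed.

Theorem theorem2p2 (R : realType) (N : nat) (x rho : nat -> R) :
  (2 <= N)%N ->
  (forall i l : nat, (1 <= i)%N -> (i < l)%N -> (l <= N)%N -> x l < x i) ->
  (forall i : nat, (1 <= i <= N)%N -> 0 < rho i) ->
  \sum_(1 <= i < N.+1) rho i = 1 ->
  forall (j : nat), (1 <= j <= N)%N ->
  forall (P : R -> {poly R}) (z : R -> nat -> R),
  (forall t : R, 0 <= t -> is_monic_OP N rho x t j (P t)) ->
  (forall t : R, 0 <= t ->
     (forall k l : nat, (1 <= k)%N -> (k < l)%N -> (l <= j)%N -> z t l < z t k) /\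
     (forall k : nat, (1 <= k <= j)%N -> root (P t) (z t k))) ->
  forall k : nat, (1 <= k <= j)%N ->
    (z t k @[t --> +oo] --> x k) /\
    (exists C T : R, forall t : R, T <= t ->
        `|z t k - x k| <= C * expR (- (mingap N x) * t)).
Proof.
(* The normalisation of rho is irrelevant: wt divides by Zt. *)
move=> N_ge2 x_decr rho_gt0 _ j /andP[j_gt0 jN] P z OP_P roots_P k kj.
have c_gt0 := mingap_gt0 N_ge2 x_decr.
set c := mingap N x in c_gt0 *.
set eta := c / 4; have eta_gt0 : 0 < eta by rewrite divr_gt0.
have eta_gap m1 m2 : (1 <= m1)%N -> (m1 < m2)%N -> (m2 <= j)%N -> 2 * eta < x m1 - x m2.
  move=> m1_gt0 m12 m2j.
  have : c <= x m1 - x m2 := mingap_le x_decr m1_gt0 m12 (leq_trans m2j jN).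
  by rewrite /eta; lra.
have [A A_ge0 P_small] := monic_OP_horner_le (ltnW N_ge2) rho_gt0 x_decr jN.
have P_prod t : 0 <= t -> forall y, (P t).[y] = \prod_(1 <= m < j.+1) (y - z t m).
  move=> t_ge0; have [monP [sizeP _]] := OP_P t t_ge0.
  by have [z_decr z_root] := roots_P t t_ge0; exact: horner_monic_decr_roots.
have [T T_ge0 e_small] :=
  expR_decay c_gt0 (divr_gt0 (exprn_gt0 j eta_gt0) (ltr_wpDl A_ge0 ltr01)).
have z_near t : T <= t -> forall m, (1 <= m <= j)%N -> `|x m - z t m| <= eta.
  move=> Tt; have t_ge0 := le_trans T_ge0 Tt.
  apply: nodes_near_roots (ltW eta_gt0) eta_gap (proj1 (roots_P t t_ge0)) _.
  move=> m mj; rewrite -P_prod //.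
  apply: le_lt_trans (P_small t m _ t_ge0 mj (OP_P t t_ge0)) _.
  apply: le_lt_trans (ler_wpM2l A_ge0 (e_small t Tt)) _.
  by rewrite mulrCA gtr_pMr ?exprn_gt0 // ltr_pdivrMr ?ltr_wpDl // mul1r ltrDl.
have z_dist t : T <= t -> `|z t k - x k| <= A / eta ^+ j.-1 * expR (- c * t).
  move=> Tt; have t_ge0 := le_trans T_ge0 Tt.
  rewrite distrC mulrAC ler_pdivlMr ?exprn_gt0 //.
  have eta_gap_le m1 m2 m1_gt0 m12 m2j := ltW (eta_gap m1 m2 m1_gt0 m12 m2j).
  apply: le_trans (node_root_dist_le eta_gap_le (z_near t Tt) kj) _.
  by rewrite -P_prod //; exact: P_small t k _ t_ge0 kj (OP_P t t_ge0).
split; first exact: cvg_expR_bound c_gt0 z_dist.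
by exists (A / eta ^+ j.-1), T.
Qed.
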